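(* In the setting described in the context, if $\omega\in\mathbb{R}$ is an energy eigenvalue, then $$\omega=-\frac{ka+eQ\rho}{a^2+\rho^2}.$$
   Context: Fix real numbers $M>0$, $a$, $Q$ with $M^2=a^2+Q^2$ (extreme Kerr–Newman black hole of mass $M$, Kerr parameter $a$, charge $Q$) and put $\rho:=M$. Fix the rest mass $m>0$ and charge $e\in\mathbb{R}$ of a Dirac particle and a half-integer $k\in\{\pm\frac12,\pm\frac32,\dots\}$ (azimuthal quantum number). For $\omega,\lambda\in\mathbb{R}$ consider the radial system for $f=(f_1,f_2):(\rho,\infty)\to\mathbb{C}^2$, $$\begin{pmatrix}(r-\rho)\frac{d}{dr}+\frac{iV(r)}{r-\rho} & imr-\lambda\\ -imr-\lambda & (r-\rho)\frac{d}{dr}-\frac{iV(r)}{r-\rho}\end{pmatrix}f(r)=0,\qquad V(r):=\omega(r^2+a^2)+ka+eQr,$$ and the angular system for $g=(g_1,g_2):(0,\pi)\to\mathbb{C}^2$, $$\begin{pmatrix}\frac{d}{d\theta}+\frac{\cot\theta}{2}-W(\theta) & -am\cos\theta+\lambda\\ am\cos\theta+\lambda & -\frac{d}{d\theta}-\frac{\cot\theta}{2}-W(\theta)\end{pmatrix}g(\theta)=0,\qquad W(\theta):=a\omega\sin\theta+\frac{k}{\sin\theta}.$$ A number $\omega\in\mathbb{R}$ is called an energy eigenvalue (of the Dirac equation, for azimuthal quantum number $k$) if there exist $\lambda\in\mathbb{R}$ and nontrivial solutions $f$ of the radial system and $g$ of the angular system with $$\int_\rho^\infty|f(r)|^2\frac{r^2+a^2}{(r-\rho)^2}\,dr<\infty,\qquad\int_0^\pi|g(\theta)|^2\sin\theta\,d\theta<\infty.$$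 *)

From Stdlib Require Import Reals.
From Coquelicot Require Import Coquelicot.
Open Scope R_scope.

Definition Vpot (omega a k e Q r : R) : R :=
  omega * (r ^ 2 + a ^ 2) + k * a + e * Q * r.

Definition Wpot (omega a k theta : R) : R :=
  a * omega * sin theta + k / sin theta.

Definition radial_solution (rho omega lambda a k e Q m : R) (f1 f2 : R -> C) : Prop :=
  forall r, rho < r ->
    exists d1 d2 : C,
      is_derive f1 r d1 /\ is_derive f2 r d2 /\
      (RtoC (r - rho) * d1 + Ci * RtoC (Vpot omega a k e Q r / (r - rho)) * f1 r
         + (Ci * RtoC (m * r) - RtoC lambda) * f2 r = 0)%C /\
      ((- (Ci * RtoC (m * r)) - RtoC lambda) * f1 r
         + RtoC (r - rho) * d2 - Ci * RtoC (Vpot omega a k e Q r / (r - rho)) * f2 r = 0)%C.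

Definition angular_solution (omega lambda a k m : R) (g1 g2 : R -> C) : Prop :=
  forall th, 0 < th < PI ->
    exists d1 d2 : C,
      is_derive g1 th d1 /\ is_derive g2 th d2 /\
      (d1 + RtoC (cos th / sin th / 2) * g1 th - RtoC (Wpot omega a k th) * g1 th
         + RtoC (- (a * m * cos th) + lambda) * g2 th = 0)%C /\
      (RtoC (a * m * cos th + lambda) * g1 th
         - d2 - RtoC (cos th / sin th / 2) * g2 th - RtoC (Wpot omega a k th) * g2 th = 0)%C.

Definition sqnorm2 (u v : C) : R := Cmod u ^ 2 + Cmod v ^ 2.

Definition energy_eigenvalue (rho a Q m e k omega : R) : Prop :=
  exists (lambda : R) (f1 f2 g1 g2 : R -> C),
    radial_solution rho omega lambda a k e Q m f1 f2 /\
    (exists r, rho < r /\ (f1 r <> 0%C \/ f2 r <> 0%C)) /\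
    angular_solution omega lambda a k m g1 g2 /\
    (exists th, 0 < th < PI /\ (g1 th <> 0%C \/ g2 th <> 0%C)) /\
    ex_RInt_gen (fun r => sqnorm2 (f1 r) (f2 r) * (r ^ 2 + a ^ 2) / (r - rho) ^ 2)
      (at_right rho) (Rbar_locally p_infty) /\
    ex_RInt_gen (fun th => sqnorm2 (g1 th) (g2 th) * sin th)
      (at_right 0) (at_left PI).

Definition half_integer (k : R) : Prop := exists n : Z, k = IZR n + / 2.

(* If V(rho) <> 0, the coefficient V(r)/(r - rho) of the radial system blows up
   at the degenerate horizon and solutions merely oscillate there instead of
   decaying.  Quantitatively, with N = |f1|^2 + |f2|^2, the function
     E(r) = V(r) N + 2 (r - rho) (m r Re(conj f1 f2) - lambda Im(conj f1 f2))
   has a derivative free of 1/(r - rho) terms, bounded by a multiple of N, while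
   V(rho) E is comparable to V(rho)^2 N near rho.  Gronwall's inequality then bounds
   N from below near rho (N cannot vanish there, again by Gronwall), so the weight
   1/(r - rho)^2 makes the normalisation integral diverge.  Hence V(rho) = 0, which
   is the claimed formula for omega. *)

From Stdlib Require Import Reals Lra.
From Coquelicot Require Import Coquelicot.
Open Scope R_scope.

Lemma is_derive_Re (f : R -> C) (t : R) (d : C) :
  is_derive f t d -> is_derive (fun s => Re (f s)) t (Re d).
Proof.
  intros Hf. apply (filterdiff_comp f fst _ fst Hf), filterdiff_linear, is_linear_fst.
Qed.

Lemma is_derive_Im (f : R -> C) (t : R) (d : C) :
  is_derive f t d -> is_derive (fun s => Im (f s)) t (Im d).
Proof.
  intros Hf. apply (filterdiff_comp f snd _ snd Hf), filterdiff_linear, is_linear_snd.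
Qed.

Lemma sqnorm2_components (u v : C) :
  sqnorm2 u v = Re u ^ 2 + Im u ^ 2 + Re v ^ 2 + Im v ^ 2.
Proof. unfold sqnorm2. rewrite !Cmod2_alt. ring. Qed.

Lemma sqnorm2_nonneg (u v : C) : 0 <= sqnorm2 u v.
Proof. rewrite sqnorm2_components. nra. Qed.

Lemma sqnorm2_pos (u v : C) : u <> 0%C \/ v <> 0%C -> 0 < sqnorm2 u v.
Proof.
  unfold sqnorm2. pose proof (pow2_ge_0 (Cmod u)). pose proof (pow2_ge_0 (Cmod v)).
  intros [Hu | Hv]; [apply Cmod_gt_0 in Hu | apply Cmod_gt_0 in Hv];
    [assert (0 < Cmod u ^ 2) | assert (0 < Cmod v ^ 2)]; try (apply pow_lt; assumption); lra.
Qed.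

Lemma conj_mul_components (u v : C) :
  (Cconj u * v)%C = (Re u * Re v + Im u * Im v, Re u * Im v - Im u * Re v).
Proof. destruct u, v. unfold Cconj, Cmult, Re, Im; simpl. f_equal; ring. Qed.

Lemma conj_mul_bounds (u v : C) :
  Rabs (Re (Cconj u * v)) <= sqnorm2 u v / 2 /\ Rabs (Im (Cconj u * v)) <= sqnorm2 u v / 2.
Proof.
  rewrite sqnorm2_components. destruct u as [u1 v1], v as [u2 v2].
  unfold Re, Im, Cconj, Cmult; simpl.
  pose proof (pow2_ge_0 (u1 - u2)). pose proof (pow2_ge_0 (u1 + u2)).
  pose proof (pow2_ge_0 (v1 - v2)). pose proof (pow2_ge_0 (v1 + v2)).
  pose proof (pow2_ge_0 (u1 - v2)). pose proof (pow2_ge_0 (u1 + v2)).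
  pose proof (pow2_ge_0 (v1 - u2)). pose proof (pow2_ge_0 (v1 + u2)).
  split; apply Rabs_le; split; nra.
Qed.

Lemma Rabs_comb_le (alpha beta x y n A : R) :
  Rabs x <= n / 2 -> Rabs y <= n / 2 -> Rabs alpha + Rabs beta <= A ->
  Rabs (alpha * x + beta * y) <= A * n / 2.
Proof.
  intros Hx Hy HA.
  pose proof (Rabs_pos alpha). pose proof (Rabs_pos beta).
  pose proof (Rabs_pos x). pose proof (Rabs_pos y).
  eapply Rle_trans; [apply Rabs_triang |]. rewrite !Rabs_mult.
  nra.
Qed.

Lemma Rabs_horizon_correction_le (V0 x G S n B C : R) :
  0 <= n -> 0 <= x -> Rabs G <= B -> Rabs S <= C * n / 2 ->
  x * (B + C) <= Rabs V0 / 2 ->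
  Rabs (V0 * x * (G * n + 2 * S)) <= V0 ^ 2 * n / 2.
Proof.
  intros Hn Hx HG HS Hsmall.
  assert (Hsum : Rabs (G * n + 2 * S) <= (B + C) * n).
  { eapply Rle_trans; [apply Rabs_triang |].
    rewrite !Rabs_mult, (Rabs_pos_eq n), (Rabs_pos_eq 2) by lra.
    pose proof (Rabs_pos G). nra. }
  rewrite !Rabs_mult, (Rabs_pos_eq x) by lra.
  rewrite <- (pow2_abs V0).
  pose proof (Rabs_pos V0).
  apply Rle_trans with (Rabs V0 * (x * ((B + C) * n))).
  - rewrite Rmult_assoc. apply Rmult_le_compat_l; [lra |].
    apply Rmult_le_compat_l; lra.
  - replace (Rabs V0 * (x * ((B + C) * n))) with (Rabs V0 * n * (x * (B + C))) by ring.
    replace (Rabs V0 ^ 2 * n / 2) with (Rabs V0 * n * (Rabs V0 / 2)) by field.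
    apply Rmult_le_compat_l; [apply Rmult_le_pos |]; lra.
Qed.

Lemma horizon_rate_le (V0 V' S P n x m B C : R) :
  0 <= n -> 0 <= x <= 1 -> 0 <= m -> Rabs V' <= B -> Rabs S <= C * n / 2 -> Rabs P <= n / 2 ->
  V0 * (V' * n + 2 * S + 2 * x * m * P) <= Rabs V0 * (B + C + m) * n.
Proof.
  intros Hn Hx Hm HV' HS HP.
  assert (Habs : Rabs (V' * n + 2 * S + 2 * x * m * P) <= (B + C + m) * n).
  { assert (Hxm : 0 <= x * m <= m) by (split; nra).
    apply Rabs_le_between in HV'. apply Rabs_le_between in HS. apply Rabs_le_between in HP.
    assert (- (B * n) <= V' * n <= B * n) by (split; nra).
    assert (- (m * n / 2) <= x * m * P <= m * n / 2) by (split; nra).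
    apply Rabs_le. split; nra. }
  eapply Rle_trans; [apply Rle_abs |].
  rewrite Rabs_mult, (Rmult_assoc (Rabs V0)).
  apply Rmult_le_compat_l; [apply Rabs_pos | exact Habs].
Qed.

Lemma gronwall_backward (Phi dPhi : R -> R) (L r1 r2 : R) :
  r1 <= r2 ->
  (forall t, r1 <= t <= r2 -> is_derive Phi t (dPhi t)) ->
  (forall t, r1 <= t <= r2 -> dPhi t <= L * Phi t) ->
  Phi r2 * exp (- (L * (r2 - r1))) <= Phi r1.
Proof.
  intros Hr HPhi Hrate.
  set (Psi := fun t => Phi t * exp (- (L * t))).
  assert (HPsi : forall t, r1 <= t <= r2 ->
            is_derive Psi t ((dPhi t - L * Phi t) * exp (- (L * t)))).
  { intros t Ht. unfold Psi.
    auto_derive; [exists (dPhi t); auto |].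
    replace (Derive (fun x => Phi x) t) with (dPhi t)
      by (symmetry; apply is_derive_unique, HPhi, Ht).
    ring. }
  destruct (MVT_gen Psi r1 r2 (fun t => (dPhi t - L * Phi t) * exp (- (L * t))))
    as (c & Hc & Hmvt);
    rewrite ?Rmin_left, ?Rmax_right in * by lra.
  - intros t Ht. apply HPsi. lra.
  - intros t Ht. apply continuity_pt_filterlim, (ex_derive_continuous Psi).
    eexists. apply HPsi. exact Ht.
  - assert (Hdecr : Psi r2 <= Psi r1).
    { assert (0 <= (L * Phi c - dPhi c) * exp (- (L * c)) * (r2 - r1)).
      { apply Rmult_le_pos; [apply Rmult_le_pos |]; [| apply Rlt_le, exp_pos |];
          specialize (Hrate c Hc); lra. }
      lra. }
    unfold Psi in Hdecr.
    replace (- (L * (r2 - r1))) with (- (L * r2) + L * r1) by ring.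
    rewrite exp_plus.
    replace (Phi r1) with (Phi r1 * exp (- (L * r1)) * exp (L * r1))
      by (rewrite Rmult_assoc, <- exp_plus, Rplus_opp_l, exp_0; ring).
    rewrite <- Rmult_assoc.
    apply Rmult_le_compat_r; [apply Rlt_le, exp_pos | exact Hdecr].
Qed.

Lemma is_RInt_inv_square_lower (F : R -> R) (rho r1 c a b y : R) :
  rho < a <= r1 -> r1 <= b ->
  (forall t, r1 < t < b -> 0 <= F t) ->
  (forall t, a < t < r1 -> c / (t - rho) ^ 2 <= F t) ->
  is_RInt F a b y -> c / (a - rho) - c / (r1 - rho) <= y.
Proof.
  intros Ha Hb Hpos Hlow HF.
  assert (HFab : ex_RInt F a b) by (exists y; exact HF).
  assert (Hinv : is_RInt (fun t => c / (t - rho) ^ 2) a r1 (c / (a - rho) - c / (r1 - rho))).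
  { replace (c / (a - rho) - c / (r1 - rho))
      with (minus (- c / (r1 - rho)) (- c / (a - rho)))
      by (unfold minus, plus, opp; simpl; field; lra).
    apply (is_RInt_derive (fun t => - c / (t - rho))); intros t Ht;
      rewrite Rmin_left, Rmax_right in Ht by lra.
    - auto_derive; [| field]; apply Rgt_not_eq; lra.
    - apply (ex_derive_continuous (V := R_NormedModule)). auto_derive. apply Rgt_not_eq. nra. }
  assert (HFl : ex_RInt F a r1) by (apply (ex_RInt_Chasles_1 F a r1 b); [lra | exact HFab]).
  assert (HFr : ex_RInt F r1 b) by (apply (ex_RInt_Chasles_2 F a r1 b); [lra | exact HFab]).
  assert (RInt (fun t => c / (t - rho) ^ 2) a r1 <= RInt F a r1)
    by (apply RInt_le; [lra | eexists; exact Hinv | exact HFl | exact Hlow]).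
  assert (0 <= RInt F r1 b) by (apply RInt_ge_0; [lra | exact HFr | exact Hpos]).
  rewrite (is_RInt_unique _ _ _ _ Hinv) in *.
  rewrite <- (is_RInt_unique _ _ _ _ HF), <- (RInt_Chasles F a r1 b HFl HFr).
  unfold plus; simpl. lra.
Qed.

Lemma not_ex_RInt_gen_inv_square (F : R -> R) (rho r1 c : R) :
  rho < r1 -> 0 < c ->
  (forall t, rho < t -> 0 <= F t) ->
  (forall t, rho < t <= r1 -> c / (t - rho) ^ 2 <= F t) ->
  ~ ex_RInt_gen F (at_right rho) (Rbar_locally p_infty).
Proof.
  intros Hr1 Hc Hpos Hlow [l Hl].
  destruct (Hl _ (locally_ball l (mkposreal 1 Rlt_0_1)))
    as [P S [eps HP] [B HS] Hall]; simpl in Hall.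
  (* Take a = rho + eta with c / eta so large that the integral over [a, b] exceeds l + 1. *)
  set (T := Rabs l + 1 + c / (r1 - rho)).
  assert (HT : 0 < T).
  { assert (0 < c / (r1 - rho)) by (apply Rdiv_lt_0_compat; lra).
    pose proof (Rabs_pos l). unfold T. lra. }
  set (eta := Rmin (eps / 2) (Rmin (r1 - rho) (c / T))).
  assert (Heta : 0 < eta).
  { pose proof (cond_pos eps). apply Rmin_pos; [lra | apply Rmin_pos; [lra |]].
    apply Rdiv_lt_0_compat; lra. }
  assert (Hetar1 : eta <= r1 - rho) by (eapply Rle_trans; [apply Rmin_r | apply Rmin_l]).
  assert (HTeta : T <= c / eta).
  { replace T with (c / (c / T)) by (field; lra).
    apply Rmult_le_compat_l; [lra |].
    apply Rinv_le_contravar; [exact Heta |].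
    eapply Rle_trans; [apply Rmin_r | apply Rmin_r]. }
  destruct (Hall (rho + eta) (Rmax r1 (B + 1))) as (y & Hy & Hyl).
  - apply HP; [| lra].
    unfold ball; simpl; unfold AbsRing_ball, abs, minus, plus, opp; simpl.
    replace (rho + eta + - rho) with eta by ring.
    rewrite Rabs_pos_eq by lra.
    assert (eta <= eps / 2) by apply Rmin_l.
    pose proof (cond_pos eps). lra.
  - apply HS. pose proof (Rmax_r r1 (B + 1)). simpl. lra.
  - assert (Hlower : c / (rho + eta - rho) - c / (r1 - rho) <= y).
    { apply (is_RInt_inv_square_lower F rho r1 c _ (Rmax r1 (B + 1))); auto.
      - lra.
      - apply Rmax_l.
      - intros t Ht. apply Hpos. lra.
      - intros t Ht. apply Hlow. lra. }
    replace (rho + eta - rho) with eta in Hlower by ring.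
    unfold ball in Hyl; simpl in Hyl.
    unfold AbsRing_ball, abs, minus, plus, opp in Hyl; simpl in Hyl.
    pose proof (Rle_abs (y + - l)). pose proof (Rle_abs l).
    unfold T in HTeta. lra.
Qed.

(* Named so that [auto_derive] treats them as opaque differentiable functions. *)
Definition re_fun (f : R -> C) (t : R) : R := Re (f t).
Definition im_fun (f : R -> C) (t : R) : R := Im (f t).

Section RadialSystem.

Variables (rho omega lambda a k e Q m : R) (f1 f2 : R -> C).
Hypothesis Hsol : radial_solution rho omega lambda a k e Q m f1 f2.

Local Notation V := (Vpot omega a k e Q).
Local Notation dens t := (sqnorm2 (f1 t) (f2 t)).
Local Notation dotp t := (Re (Cconj (f1 t) * f2 t)).
Local Notation crossp t := (Im (Cconj (f1 t) * f2 t)).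

Lemma radial_components_derive (t : R) : rho < t ->
  let W := V t / (t - rho) in
  is_derive (re_fun f1) t
    ((W * Im (f1 t) + m * t * Im (f2 t) + lambda * Re (f2 t)) / (t - rho)) /\
  is_derive (im_fun f1) t
    ((- W * Re (f1 t) - m * t * Re (f2 t) + lambda * Im (f2 t)) / (t - rho)) /\
  is_derive (re_fun f2) t
    ((- (m * t) * Im (f1 t) + lambda * Re (f1 t) - W * Im (f2 t)) / (t - rho)) /\
  is_derive (im_fun f2) t
    ((m * t * Re (f1 t) + lambda * Im (f1 t) + W * Re (f2 t)) / (t - rho)).
Proof.
  intros Ht W.
  destruct (Hsol t Ht) as (d1 & d2 & D1 & D2 & E1 & E2).
  apply is_derive_Re in D1 as DRe1. apply is_derive_Im in D1 as DIm1.
  apply is_derive_Re in D2 as DRe2. apply is_derive_Im in D2 as DIm2.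
  fold W in E1, E2.
  destruct d1 as [a1 b1], d2 as [a2 b2], (f1 t) as [u1 v1], (f2 t) as [u2 v2].
  unfold RtoC, Ci, Cplus, Cmult, Cminus, Copp in E1, E2; simpl in E1, E2.
  injection E1 as E1re E1im. injection E2 as E2re E2im.
  assert (derive_value : forall (g : R -> R) (d d' : R),
            is_derive g t d -> d' = d -> is_derive g t d')
    by (intros; subst; assumption).
  unfold Re, Im in *; simpl in *.
  refine (conj (derive_value _ _ _ DRe1 _) (conj (derive_value _ _ _ DIm1 _)
            (conj (derive_value _ _ _ DRe2 _) (derive_value _ _ _ DIm2 _))));
    apply (Rmult_eq_reg_l (t - rho)); try (apply Rgt_not_eq; lra);
    field_simplify; try (apply Rgt_not_eq; lra); lra.
Qed.

Lemma density_derive (t : R) : rho < t ->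
  is_derive (fun s => dens s) t (4 / (t - rho) * (m * t * crossp t + lambda * dotp t)).
Proof.
  intros Ht. destruct (radial_components_derive t Ht) as (D1 & D2 & D3 & D4).
  apply (is_derive_ext
           (fun s => re_fun f1 s ^ 2 + im_fun f1 s ^ 2 + re_fun f2 s ^ 2 + im_fun f2 s ^ 2)).
  { intros s. rewrite sqnorm2_components. reflexivity. }
  auto_derive; [repeat split; eexists; eassumption |].
  erewrite !is_derive_unique by eassumption.
  rewrite conj_mul_components. unfold re_fun, im_fun, Re, Im; simpl.
  field. apply Rgt_not_eq; lra.
Qed.

(* The 1/(t - rho) terms of the radial system cancel in the derivative of this
   combination (horizon_energy_derive), and at t = rho it reduces to V(rho) |f|^2. *)
Definition horizon_energy (t : R) : R :=
  V t * dens t + 2 * (t - rho) * (m * t * dotp t - lambda * crossp t).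

Definition horizon_energy_rate (t : R) : R :=
  (2 * omega * t + e * Q) * dens t + 2 * (m * t * dotp t - lambda * crossp t)
  + 2 * (t - rho) * m * dotp t.

Lemma horizon_energy_derive (t : R) : rho < t ->
  is_derive horizon_energy t (horizon_energy_rate t).
Proof.
  intros Ht. destruct (radial_components_derive t Ht) as (D1 & D2 & D3 & D4).
  apply (is_derive_ext
    (fun s => V s * (re_fun f1 s ^ 2 + im_fun f1 s ^ 2 + re_fun f2 s ^ 2 + im_fun f2 s ^ 2)
      + 2 * (s - rho) * (m * s * (re_fun f1 s * re_fun f2 s + im_fun f1 s * im_fun f2 s)
                         - lambda * (re_fun f1 s * im_fun f2 s - im_fun f1 s * re_fun f2 s)))).
  { intros s. unfold horizon_energy. rewrite sqnorm2_components, conj_mul_components. reflexivity. }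
  unfold Vpot. auto_derive; [repeat split; eexists; eassumption |].
  erewrite !is_derive_unique by eassumption.
  unfold horizon_energy_rate, Vpot. rewrite sqnorm2_components, conj_mul_components.
  unfold re_fun, im_fun, Re, Im; simpl.
  field. apply Rgt_not_eq; lra.
Qed.

Hypothesis Hm : 0 < m.
Hypothesis Hrho : 0 < rho.

Lemma density_pos_backward (t0 rs : R) : rho < t0 <= rs -> 0 < dens rs -> 0 < dens t0.
Proof.
  intros Ht0 Hrs.
  set (K := m * rs + Rabs lambda).
  set (L := 2 * K / (t0 - rho)).
  assert (Hgr : dens rs * exp (- (L * (rs - t0))) <= dens t0).
  { apply (gronwall_backward (fun s => dens s)
             (fun s => 4 / (s - rho) * (m * s * crossp s + lambda * dotp s))); [lra | |].
    - intros s Hs. apply density_derive. lra.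
    - intros s Hs.
      destruct (conj_mul_bounds (f1 s) (f2 s)) as [Hp Hq].
      assert (Hcomb : Rabs (m * s * crossp s + lambda * dotp s) <= K * dens s / 2).
      { apply Rabs_comb_le; [exact Hq | exact Hp |].
        rewrite Rabs_pos_eq by nra. unfold K. nra. }
      apply Rabs_le_between in Hcomb.
      pose proof (sqnorm2_nonneg (f1 s) (f2 s)).
      assert (0 <= K) by (unfold K; pose proof (Rabs_pos lambda); nra).
      assert (Hinv : / (s - rho) <= / (t0 - rho)) by (apply Rinv_le_contravar; lra).
      assert (0 < / (s - rho)) by (apply Rinv_0_lt_compat; lra).
      unfold L, Rdiv. nra. }
  pose proof (exp_pos (- (L * (rs - t0)))). nra.
Qed.

Lemma horizon_estimates : V rho <> 0 ->
  exists delta K, 0 < delta /\ 0 <= K /\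
    forall t, rho < t <= rho + delta ->
      Rabs (V rho * horizon_energy t - V rho ^ 2 * dens t) <= V rho ^ 2 * dens t / 2 /\
      V rho * horizon_energy_rate t <= K * dens t.
Proof.
  intros HV0.
  set (B := 2 * Rabs omega * (rho + 1) + Rabs (e * Q)).
  set (C := m * (rho + 1) + Rabs lambda).
  pose proof (Rabs_pos omega). pose proof (Rabs_pos (e * Q)). pose proof (Rabs_pos lambda).
  assert (HB : 0 <= B) by (unfold B; nra).
  assert (HC : 0 <= C) by (unfold C; nra).
  assert (HV0pos : 0 < Rabs (V rho)) by (apply Rabs_pos_lt, HV0).
  set (delta := Rmin 1 (Rabs (V rho) / (2 * (B + C) + 1))).
  exists delta, (Rabs (V rho) * (B + C + m)).
  assert (Hdelta1 : delta <= 1) by apply Rmin_l.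
  assert (Hdelta : delta * (2 * (B + C) + 1) <= Rabs (V rho)).
  { assert (Hmin : delta <= Rabs (V rho) / (2 * (B + C) + 1)) by apply Rmin_r.
    apply (Rmult_le_compat_r (2 * (B + C) + 1)) in Hmin; [| lra].
    unfold Rdiv in Hmin. rewrite Rmult_assoc, Rinv_l, Rmult_1_r in Hmin; lra. }
  split; [apply Rmin_pos; [lra | apply Rdiv_lt_0_compat; lra] |].
  split; [apply Rmult_le_pos; lra |].
  intros t Ht.
  pose proof (sqnorm2_nonneg (f1 t) (f2 t)) as Hn.
  destruct (conj_mul_bounds (f1 t) (f2 t)) as [Hp Hq].
  assert (HS : Rabs (m * t * dotp t + - lambda * crossp t) <= C * dens t / 2).
  { apply Rabs_comb_le; [exact Hp | exact Hq |].
    rewrite Rabs_Ropp, Rabs_pos_eq by nra. unfold C. nra. }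
  replace (m * t * dotp t + - lambda * crossp t) with (m * t * dotp t - lambda * crossp t)
    in HS by ring.
  split.
  - replace (V rho * horizon_energy t - V rho ^ 2 * dens t)
      with (V rho * (t - rho) * ((omega * (t + rho) + e * Q) * dens t
                                  + 2 * (m * t * dotp t - lambda * crossp t)))
      by (unfold horizon_energy, Vpot; ring).
    apply (Rabs_horizon_correction_le _ _ _ _ _ B C); [exact Hn | lra | | exact HS | nra].
    eapply Rle_trans; [apply Rabs_triang |].
    rewrite Rabs_mult, (Rabs_pos_eq (t + rho)) by lra.
    assert (Rabs omega * (t + rho) <= Rabs omega * (2 * (rho + 1)))
      by (apply Rmult_le_compat_l; lra).
    unfold B. lra.
  - apply (horizon_rate_le _ _ _ _ _ _ _ B C); [exact Hn | lra | lra | | exact HS | exact Hp].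
    eapply Rle_trans; [apply Rabs_triang |].
    rewrite (Rabs_mult (2 * omega)), Rabs_mult, (Rabs_pos_eq 2), (Rabs_pos_eq t) by lra.
    assert (Rabs omega * t <= Rabs omega * (rho + 1)) by (apply Rmult_le_compat_l; lra).
    unfold B. lra.
Qed.

Lemma density_lower_bound : V rho <> 0 -> (exists rs, rho < rs /\ 0 < dens rs) ->
  exists r1 c, rho < r1 /\ 0 < c /\ forall t, rho < t <= r1 -> c <= dens t.
Proof.
  intros HV0 (rs & Hrs & Hdens_rs).
  destruct (horizon_estimates HV0) as (delta & K & Hdelta & HK & Hest).
  set (r1 := Rmin rs (rho + delta)).
  assert (Hr1 : rho < r1 <= rho + delta)
    by (split; [apply Rmin_glb_lt | apply Rmin_r]; lra).
  assert (Hdens_r1 : 0 < dens r1)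
    by (apply (density_pos_backward r1 rs); [split; [lra | apply Rmin_l] | exact Hdens_rs]).
  assert (HV2 : 0 < V rho ^ 2) by (apply pow2_gt_0, HV0).
  set (Phi := fun t => V rho * horizon_energy t).
  assert (Hcmp : forall t, rho < t <= r1 ->
            V rho ^ 2 * dens t / 2 <= Phi t <= 3 * (V rho ^ 2 * dens t) / 2).
  { intros t Ht. destruct (Hest t ltac:(lra)) as [Hclose _].
    apply Rabs_le_between in Hclose. unfold Phi. lra. }
  set (L := 2 * K / V rho ^ 2).
  assert (HL : 0 <= L) by (apply Rmult_le_pos; [lra | apply Rlt_le, Rinv_0_lt_compat, HV2]).
  assert (HPhi_r1 : 0 < Phi r1).
  { destruct (Hcmp r1 ltac:(lra)) as [Hlow _].
    assert (0 < V rho ^ 2 * dens r1) by (apply Rmult_lt_0_compat; assumption). lra. }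
  exists r1, (2 * (Phi r1 * exp (- (L * delta))) / (3 * V rho ^ 2)).
  split; [lra | split].
  { apply Rdiv_lt_0_compat; [| lra].
    pose proof (exp_pos (- (L * delta))). nra. }
  intros t Ht.
  assert (Hgr : Phi r1 * exp (- (L * (r1 - t))) <= Phi t).
  { apply (gronwall_backward Phi (fun s => V rho * horizon_energy_rate s)); [lra | |].
    - intros s Hs. apply (is_derive_scal horizon_energy). apply horizon_energy_derive. lra.
    - intros s Hs. destruct (Hest s ltac:(lra)) as [_ Hrate].
      destruct (Hcmp s ltac:(lra)) as [Hlow _].
      replace (L * Phi s) with (K * dens s + L * (Phi s - V rho ^ 2 * dens s / 2))
        by (unfold L; field; exact HV0).
      assert (0 <= L * (Phi s - V rho ^ 2 * dens s / 2)) by (apply Rmult_le_pos; lra).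
      lra. }
  assert (Hexp : exp (- (L * delta)) <= exp (- (L * (r1 - t)))).
  { destruct (Req_dec (L * delta) (L * (r1 - t))) as [Heq | Hneq]; [rewrite Heq; lra |].
    apply Rlt_le, exp_increasing.
    assert (L * (r1 - t) <= L * delta) by (apply Rmult_le_compat_l; lra). lra. }
  destruct (Hcmp t Ht) as [_ Hup].
  apply (Rmult_le_reg_r (3 * V rho ^ 2)); [lra |].
  unfold Rdiv. rewrite Rmult_assoc, Rinv_l, Rmult_1_r by lra.
  assert (Phi r1 * exp (- (L * delta)) <= Phi r1 * exp (- (L * (r1 - t))))
    by (apply Rmult_le_compat_l; lra).
  lra.
Qed.

End RadialSystem.

Theorem mainTheorem4 (M a Q m e k omega : R) :
  0 < M -> M ^ 2 = a ^ 2 + Q ^ 2 ->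
  0 < m -> half_integer k ->
  energy_eigenvalue M a Q m e k omega ->
  omega = - (k * a + e * Q * M) / (a ^ 2 + M ^ 2).
Proof.
  (* Extremality is already built into the double pole of the radial system at rho = M. *)
  intros HM _ Hm _ (lambda & f1 & f2 & _ & _ & Hrad & (rs & Hrs & Hnz) & _ & _ & Hint & _).
  destruct (Req_dec (Vpot omega a k e Q M) 0) as [HV0 | HV0].
  - unfold Vpot in HV0. field_simplify_eq; [lra | nra].
  - exfalso.
    destruct (density_lower_bound M omega lambda a k e Q m f1 f2 Hrad Hm HM HV0)
      as (r1 & c & Hr1 & Hc & Hlow); [exists rs; split; [| apply sqnorm2_pos]; assumption |].
    apply (not_ex_RInt_gen_inv_square _ M r1 (c * M ^ 2) Hr1) in Hint; [exact Hint | | |].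
    + apply Rmult_lt_0_compat; [exact Hc | apply pow_lt, HM].
    + intros t Ht. pose proof (sqnorm2_nonneg (f1 t) (f2 t)).
      pose proof (pow2_ge_0 t). pose proof (pow2_ge_0 a).
      apply Rmult_le_pos; [nra | apply Rlt_le, Rinv_0_lt_compat, pow_lt; lra].
    + intros t Ht. specialize (Hlow t Ht).
      assert (M ^ 2 <= t ^ 2 + a ^ 2)
        by (pose proof (pow2_ge_0 a); assert (M ^ 2 <= t ^ 2) by (apply pow_incr; lra); lra).
      apply Rmult_le_compat_r; [apply Rlt_le, Rinv_0_lt_compat, pow_lt; lra |].
      apply Rmult_le_compat; [lra | apply pow2_ge_0 | exact Hlow | assumption].
Qed.
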